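(* Let $K_1,\dots,K_n$ be an operator Frobenius algebra on an $n$-manifold with structure functions $a_{ij}^s$, pairwise symmetries of each other, and work in the real-analytic (or formal) category. Writing the manifold in local coordinates $u=(u^1,\dots,u^n)$, consider the system of PDEs $$u_{t_j}=K_j(u)\,u_x,\qquad j=1,\dots,n,$$ for $u=u(x;t_1,\dots,t_n)$ with a scalar variable $x$. Let $u$ be any (analytic or formal) solution such that the Jacobian matrix $\partial u/\partial t$ is invertible, and for fixed $x$ let $t_i=t_i(u;x)$ be obtained by inverting $(t_1,\dots,t_n)\mapsto u(x;t)$. Then for each fixed value of $x$, the operator field $K=\sum_i t_i(u;x)K_i$ is a common symmetry of $K_1,\dots,K_n$.
   Context: For operator fields ($(1,1)$-tensor fields) $L,M$ and vector fields $\xi,\eta$ set $\langle L,M\rangle(\xi,\eta)=LM[\xi,\eta]+[L\xi,M\eta]-L[\xi,M\eta]-M[L\xi,\eta]$. Commuting operator fields $L,M$ are symmetries of each other if $\langle L,M\rangle(\xi,\xi)=0$ for all $\xi$; a common symmetry of several operator fields is an operator field commuting with and being a symmetry of each of them. An operator Frobenius algebra on an $n$-manifold $\mathsf M$ is given by $n$ smooth pairwise commuting operator fields $K_1,\dots,K_n$ such that at each $x\in\mathsf M$: (A1) there is $\xi\in T_x\mathsf M$ with $K_1\xi,\dots,K_n\xi$ linearly independent, and (A2) there is $a\in T_x^*\mathsf M$ with $K_1^*a,\dots,K_n^*a$ linearly independent. Its structure functions $a_{ij}^s$ are defined by $K_iK_j=\sum_s a_{ij}^sK_s$. *)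

(* Everything is stated in a local chart:
   the manifold is an open set U of R^n (column vectors 'cV[R]_n). *)
From HB Require Import structures.
From mathcomp Require Import all_boot all_order all_algebra.
From mathcomp Require Import all_classical all_reals all_analysis.
Set Implicit Arguments. Unset Strict Implicit. Unset Printing Implicit Defensive.
Import Order.TTheory GRing.Theory Num.Theory.
Import numFieldNormedType.Exports.
Local Open Scope classical_set_scope.
Local Open Scope ring_scope.

Section Defs.
Variable R : realType.

(** Real-analyticity of a scalar function on an open set U of R^m: near each
    point a of U, f is the sum of an absolutely convergent power series
    centred at a (summed along the exhaustion by cubes [0,N]^m of multi-indices). *)
Definition ps_cube_sum m (c : ('I_m -> nat) -> R) (a x : 'cV[R]_m) (N : nat) : R :=
  \sum_(al : {ffun 'I_m -> 'I_N.+1})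
     c (fun i => nat_of_ord (al i)) * \prod_(i < m) (x i 0 - a i 0) ^+ al i.

Definition ps_cube_abs_sum m (c : ('I_m -> nat) -> R) (a x : 'cV[R]_m) (N : nat) : R :=
  \sum_(al : {ffun 'I_m -> 'I_N.+1})
     `|c (fun i => nat_of_ord (al i))| * \prod_(i < m) `|x i 0 - a i 0| ^+ al i.

Definition analytic_on m (U : set 'cV[R]_m) (f : 'cV[R]_m -> R) : Prop :=
  forall a, U a -> exists r : R, 0 < r /\
    exists c : ('I_m -> nat) -> R, forall x, `|x - a| < r ->
      (exists B : R, forall N, ps_cube_abs_sum c a x N <= B) /\
      (ps_cube_sum c a x @ \oo --> f x).

Definition mx_analytic_on m p q (U : set 'cV[R]_m) (F : 'cV[R]_m -> 'M[R]_(p, q)) : Prop :=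
  forall i j, analytic_on U (fun x => F x i j).

Definition vfield n := 'cV[R]_n -> 'cV[R]_n.
Definition opfield n := 'cV[R]_n -> 'M[R]_n.

Definition lie n (xi eta : vfield n) : vfield n :=
  fun p => 'D_(xi p) eta p - 'D_(eta p) xi p.

Definition opapp n (L : opfield n) (xi : vfield n) : vfield n :=
  fun p => L p *m xi p.

Definition opbracket n (L M : opfield n) (xi eta : vfield n) : vfield n :=
  fun p => L p *m (M p *m lie xi eta p) + lie (opapp L xi) (opapp M eta) p
           - L p *m lie xi (opapp M eta) p - M p *m lie (opapp L xi) eta p.

Definition vfield_on n (V : set 'cV[R]_n) (xi : vfield n) : Prop :=
  forall p, V p -> differentiable xi p.

Definition commute_on n (V : set 'cV[R]_n) (L M : opfield n) : Prop :=
  forall p, V p -> L p *m M p = M p *m L p.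

Definition symmetry_on n (V : set 'cV[R]_n) (L M : opfield n) : Prop :=
  forall xi, vfield_on V xi -> forall p, V p -> opbracket L M xi xi p = 0.

Definition common_symmetry_on n (V : set 'cV[R]_n) (K : opfield n)
    (Ks : 'I_n -> opfield n) : Prop :=
  forall j, commute_on V K (Ks j) /\ symmetry_on V K (Ks j).

Definition op_frobenius_algebra n (U : set 'cV[R]_n) (Ks : 'I_n -> opfield n) : Prop :=
  (forall i, mx_analytic_on U (Ks i)) /\
  (forall i j, commute_on U (Ks i) (Ks j)) /\
  (forall p, U p -> exists xi : 'cV[R]_n, forall c : 'I_n -> R,
      \sum_(i < n) c i *: (Ks i p *m xi) = 0 -> forall i, c i = 0) /\
  (forall p, U p -> exists a : 'rV[R]_n, forall c : 'I_n -> R,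
      \sum_(i < n) c i *: (a *m Ks i p) = 0 -> forall i, c i = 0).

Definition xt_pt n (x : R) (t : 'cV[R]_n) : 'cV[R]_(1 + n) := col_mx (x%:M) t.
Definition dir_x n : 'cV[R]_(1 + n) := delta_mx (lshift n ord0) 0.
Definition dir_t n (j : 'I_n) : 'cV[R]_(1 + n) := delta_mx (rshift 1 j) 0.

End Defs.

(* Write K = sum_i t_i K_i and A(v) = sum_i (d_v t_i) K_i.  For commuting L, M the
   value of <L,M>(xi,xi) at p only depends on c = xi(p) and on the first derivatives of L
   and M (those of xi cancel), and it is linear in L together with its derivative.  Since
   dK = A + sum_i t_i dK_i, this gives
     <K,K_j>(xi,xi) = sum_i t_i <K_i,K_j>(xi,xi) + K_j A(c) c - A(K_j c) c,
   where the sum vanishes because the K_i are symmetries of each other.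
   Differentiating u(x; t(u;x)) = u and using u_{t_i} = K_i u_x gives A(v) u_x = v.  The
   vectors K_j u_x = u_{t_j} form a basis, so an operator commuting with every K_l and
   killing u_x is zero; applied to A(K_j v) - K_j A(v) this yields A(K_j v) = K_j A(v),
   and the last term vanishes as well.  Analyticity is only used through
   differentiability: an analytic function differs from its affine part by O(|x - a|^2). *)

From HB Require Import structures.
From mathcomp Require Import all_boot all_order all_algebra.
From mathcomp Require Import all_classical all_reals all_analysis.
From mathcomp Require Import ring.
Set Implicit Arguments. Unset Strict Implicit. Unset Printing Implicit Defensive.
Import Order.TTheory GRing.Theory Num.Theory.
Import numFieldNormedType.Exports.
Local Open Scope classical_set_scope.
Local Open Scope ring_scope.

Section MultiIndex.
Variables (m N : nat).
Implicit Type al : {ffun 'I_m -> 'I_N.+2}.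

Definition mdeg al : nat := (\sum_k al k)%N.
Definition mzero : {ffun 'I_m -> 'I_N.+2} := [ffun => ord0].
Definition munit i : {ffun 'I_m -> 'I_N.+2} :=
  [ffun k => if k == i then Ordinal (isT : 1 < N.+2)%N else ord0].

Lemma mdeg_eq0 al : (mdeg al == 0)%N = (al == mzero).
Proof.
rewrite /mdeg sum_nat_eq0; apply/forallP/eqP => [al0|-> k]; last by rewrite ffunE.
by apply/ffunP => k; rewrite ffunE; apply/val_inj/eqP; exact: al0.
Qed.

Lemma mdeg_munit i : mdeg (munit i) = 1%N.
Proof.
rewrite /mdeg (bigD1 i) //= ffunE eqxx big1 // => k ki.
by rewrite ffunE (negbTE ki).
Qed.

Lemma munit_inj : injective munit.
Proof.
move=> i j /ffunP /(_ i); rewrite !ffunE eqxx.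
by case: (i =P j) => // _ /(congr1 val).
Qed.

Lemma mdeg_eq1 al : (mdeg al == 1)%N = (al \in munit @: 'I_m).
Proof.
apply/idP/imsetP => [al1|[i _ ->]]; last by rewrite mdeg_munit.
have : (mdeg al != 0)%N by rewrite (eqP al1).
rewrite /mdeg sum_nat_eq0 => /forallPn [i /= ali]; exists i => //.
move: al1; rewrite /mdeg (bigD1 i) //= => /eqP al1.
have ali1 : nat_of_ord (al i) = 1%N.
  by move: ali al1; case: (nat_of_ord (al i)) => [|[|k]] //= _; rewrite addSn.
move: al1; rewrite ali1 add1n => /eqP; rewrite eqSS sum_nat_eq0 => /forallP al0.
apply/ffunP => k; rewrite ffunE; apply/val_inj => /=.
by case: (k =P i) => [->//|/eqP ki]; apply/eqP; move: (al0 k); rewrite ki.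
Qed.

Lemma big_mdeg_le1 (V : nmodType) (F : {ffun 'I_m -> 'I_N.+2} -> V) :
  \sum_(al | (mdeg al <= 1)%N) F al = F mzero + \sum_(i < m) F (munit i).
Proof.
rewrite (bigID (fun al => mdeg al == 0)%N) /=; congr (_ + _).
  rewrite (eq_bigl (pred1 mzero)) ?big_pred1_eq // => al.
  by rewrite /= -mdeg_eq0; case: (mdeg al) => [|[|k]].
rewrite (eq_bigl (mem (munit @: 'I_m))).
  by rewrite big_imset //= => i j _ _; exact: munit_inj.
by move=> al /=; rewrite -mdeg_eq1; case: (mdeg al) => [|[|k]].
Qed.

End MultiIndex.

Section MatrixCalculus.
Variables (R : realType) (V : normedModType R).

Lemma is_derive_mxP m k (M : V -> 'M[R]_(m, k)) p v dM :
  is_derive p v M dM <-> forall i j, is_derive p v (fun q => M q i j) (dM i j).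
Proof.
split=> [[dM_ex <-] i j | hM].
  have dMij := (derivable_mxP M p v).1 dM_ex i j.
  by apply: DeriveDef => //; rewrite (derive_mx dM_ex) mxE.
have dM_ex : derivable M p v by apply/derivable_mxP => i j; case: (hM i j).
apply: DeriveDef => //; apply/matrixP => i j.
by rewrite (derive_mx dM_ex) mxE derive_val.
Qed.

Lemma is_derive_mulmx m k l (A : V -> 'M[R]_(m, k)) (B : V -> 'M[R]_(k, l))
    p v dA dB :
  is_derive p v A dA -> is_derive p v B dB ->
  is_derive p v (fun q => A q *m B q) (dA *m B p + A p *m dB).
Proof.
move=> /is_derive_mxP hA /is_derive_mxP hB; apply/is_derive_mxP => i j.
have -> : (fun q => (A q *m B q) i j) = \sum_(c < k) ((fun q => A q i c) * (fun q => B q c j)).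
  by apply/funext => q; rewrite mxE fct_sumE.
apply: is_derive_eq; rewrite !mxE -big_split /=; apply: eq_bigr => c _.
by rewrite addrC; congr (_ + _); exact: mulrC.
Qed.

Lemma is_derive_scalemx m k (s : V -> R) (A : V -> 'M[R]_(m, k)) p v ds dA :
  is_derive p v s ds -> is_derive p v A dA ->
  is_derive p v (fun q => s q *: A q) (ds *: A p + s p *: dA).
Proof.
move=> hs /is_derive_mxP hA; apply/is_derive_mxP => i j.
have -> : (fun q => (s q *: A q) i j) = s * (fun q => A q i j).
  by apply/funext => q; rewrite mxE.
by apply: is_derive_eq; rewrite !mxE addrC; congr (_ + _); exact: mulrC.
Qed.

Lemma is_derive_lincomb k m l (s : 'I_k -> V -> R) (Ls : 'I_k -> V -> 'M[R]_(m, l))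
    p v ds dLs :
  (forall i, is_derive p v (s i) (ds i)) -> (forall i, is_derive p v (Ls i) (dLs i)) ->
  is_derive p v (fun q => \sum_i s i q *: Ls i q)
    (\sum_i ds i *: Ls i p + \sum_i s i p *: dLs i).
Proof.
move=> hs hL; rewrite -big_split /=.
rewrite (_ : (fun q => _) = \sum_i (fun q => s i q *: Ls i q)); last first.
  by apply/funext => q; rewrite fct_sumE.
exact: is_derive_sum (fun i => is_derive_scalemx (hs i) (hL i)).
Qed.

Lemma differentiable_mx m k (M : V -> 'M[R]_(m, k)) p :
  (forall i j, differentiable (fun q => M q i j) p) -> differentiable M p.
Proof.
move=> hM.
have -> : M = \sum_(i < m) \sum_(j < k) (fun q => M q i j *: delta_mx i j).
  apply/funext => q; rewrite [LHS]matrix_sum_delta fct_sumE.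
  by apply: eq_bigr => i _; rewrite fct_sumE.
by apply: differentiable_sum => i; apply: differentiable_sum => j; exact: differentiableZl.
Qed.

Lemma is_derive_diff (W : normedModType R) (f : V -> W) p v :
  differentiable f p -> is_derive p v f ('d f p v).
Proof. by move=> df; apply: DeriveDef; [exact: diff_derivable | exact: deriveE]. Qed.

Lemma derive_comp (U W : normedModType R) (f : V -> U) (g : U -> W) p v :
  differentiable f p -> differentiable g (f p) ->
  'D_v (g \o f) p = 'd g (f p) ('D_v f p).
Proof.
move=> df dg; rewrite deriveE; last exact: differentiable_comp.
by rewrite diff_comp //= (deriveE v df).
Qed.

Lemma is_derive_coord_lincomb k m l (t : V -> 'cV[R]_k) (Ls : 'I_k -> V -> 'M[R]_(m, l))
    p v :
  differentiable t p -> (forall i, differentiable (Ls i) p) ->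
  is_derive p v (fun q => \sum_i t q i 0 *: Ls i q)
    (\sum_i ('D_v t p) i 0 *: Ls i p + \sum_i t p i 0 *: 'd (Ls i) p v).
Proof.
move=> dt dL; apply: is_derive_lincomb => i; last exact: is_derive_diff.
exact: (is_derive_mxP _ _ _ _).1 (derivableP (diff_derivable dt)) i 0.
Qed.

End MatrixCalculus.

Section AnalyticDifferentiable.
Variable R : realType.

Lemma mx_normr_entry_le p q (M : 'M[R]_(p, q)) i j : `|M i j| <= `|M|.
Proof.
rewrite [leRHS]/Num.Def.normr /= mx_normrE.
exact: (le_bigmax _ (fun ij : 'I_p * 'I_q => `|M ij.1 ij.2|) (i, j)).
Qed.

Lemma mx_normr_le p q (M : 'M[R]_(p, q)) b :
  0 <= b -> (forall i j, `|M i j| <= b) -> `|M| <= b.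
Proof.
move=> b0 Mb; rewrite [leLHS]/Num.Def.normr /= mx_normrE.
by apply: bigmax_le => // -[i j] _; exact: Mb.
Qed.

Lemma differentiable_sqr_bounded (V : normedModType R) (g : V -> R) a C e :
  0 < e -> (forall x, `|x - a| < e -> `|g x| <= C * `|x - a| ^+ 2) ->
  differentiable g a.
Proof.
move=> e0 gC.
have ga : g a = 0.
  by apply/normr0_eq0/eqP; rewrite eq_le normr_ge0 andbT;
     move: (gC a); rewrite subrr normr0 expr0n /= mulr0; apply.
apply/diffP; apply: (@getPex _ (fun (df : {linear V -> R}) => continuous df /\
  forall x, g x = g (lim (nbhs a)) + df (x - lim (nbhs a))
                  +o_(x \near a) (x - lim (nbhs a)))).
have lin0 : linear (fun _ : V => 0 : R) by move=> ? ? ?; rewrite scaler0 addr0.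
pose L0 : {linear V -> R} := HB.pack (fun _ : V => 0 : R) (GRing.isLinear.Build _ _ _ _ _ lin0).
exists L0; split; first exact: cst_continuous.
rewrite (_ : lim (nbhs a) = a); last exact: lim_id.
suff go : (fun x => g x) = (fun x => g a + L0 (x - a)) +o_ (nbhs a) (fun x => x - a).
  by move=> x; exact: (congr1 (fun h => h x) go).
apply/eqaddoP => _ /posnumP[eps].
have C1 : 0 < `|C| + 1 by rewrite ltr_pwDr.
have near_lt d : 0 < d -> \forall x \near a, `|x - a| < d.
  by move=> d0; apply: filterS (nbhsx_ballx a _ d0) => y; rewrite -ball_normE /= distrC.
near=> x.
have xe : `|x - a| < e by near: x; exact: near_lt.
have xeps : `|x - a| < eps%:num / (`|C| + 1) by near: x; apply: near_lt; rewrite divr_gt0.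
rewrite /= ga add0r subr0; apply: le_trans (gC x xe) _.
rewrite expr2 mulrA ler_wpM2r // (le_trans (ler_wpM2r _ (ler_norm C))) //.
apply: (le_trans (ler_wpM2r (normr_ge0 _) (_ : `|C| <= `|C| + 1))); first by rewrite lerDl.
by rewrite mulrC -ler_pdivlMr // ltW.
Unshelve. all: by end_near.
Qed.

Variable m : nat.
Implicit Types (c : ('I_m -> nat) -> R) (a x : 'cV[R]_m).

Definition ps_affine_part c a x : R :=
  c (fun _ => 0%N) + \sum_(i < m) c (fun k => nat_of_bool (k == i)) * (x i 0 - a i 0).

Definition ps_cube_tail c a x N : R :=
  \sum_(al : {ffun 'I_m -> 'I_N.+2} | ~~ (mdeg al <= 1)%N)
    c (fun i => nat_of_ord (al i)) * \prod_(i < m) (x i 0 - a i 0) ^+ al i.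

Lemma ps_cube_sum_split c a x N :
  ps_cube_sum c a x N.+1 = ps_affine_part c a x + ps_cube_tail c a x N.
Proof.
rewrite /ps_cube_sum (bigID (fun al : {ffun 'I_m -> 'I_N.+2} => mdeg al <= 1)%N) /=.
rewrite big_mdeg_le1; congr (_ + _ + _).
  rewrite (_ : (fun i => nat_of_ord (mzero m N i)) = fun _ => 0%N); last first.
    by apply/funext => i; rewrite ffunE.
  by rewrite big1 ?mulr1 // => i _; rewrite ffunE expr0.
apply: eq_bigr => i _.
rewrite (_ : (fun k => nat_of_ord (munit N i k)) = fun k => nat_of_bool (k == i)); last first.
  by apply/funext => k; rewrite ffunE; case: (k == i).
rewrite (bigD1 i) //= ffunE eqxx expr1 big1 ?mulr1 // => k ki.
by rewrite ffunE (negbTE ki) expr0.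
Qed.

Lemma exprn_le_sqr_scaled (d r : R) k : 0 < r -> 0 <= d -> d <= r -> (1 < k)%N ->
  d ^+ k <= (d / r) ^+ 2 * r ^+ k.
Proof.
move=> r0 d0 dr; case: k => [|[|k]] // _.
have -> : (d / r) ^+ 2 * r ^+ k.+2 = d ^+ 2 * r ^+ k.
  by rewrite !exprS expr0; field; exact: lt0r_neq0.
rewrite [leLHS](exprS d k.+1) exprS mulrA -expr2 ler_wpM2l ?exprn_ge0 //.
by apply: lerXn2r; rewrite // ?nnegrE // ltW.
Qed.

Lemma ps_cube_tail_le c a x N (r d : R) :
  0 < r -> `|x - a| <= d -> d <= r ->
  `|ps_cube_tail c a x N| <= (d / r) ^+ 2 * ps_cube_abs_sum c a (a + const_mx r) N.+1.
Proof.
move=> r0 xd dr; have d0 : 0 <= d by apply: le_trans xd.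
rewrite /ps_cube_tail; apply: (le_trans (ler_norm_sum _ _ _)).
apply: (@le_trans _ _ (\sum_(al : {ffun 'I_m -> 'I_N.+2} | ~~ (mdeg al <= 1)%N)
     (d / r) ^+ 2 * (`|c (fun i => nat_of_ord (al i))| * r ^+ mdeg al))).
  apply: ler_sum => al al2; rewrite normrM mulrCA ler_wpM2l // normr_prod.
  apply: (@le_trans _ _ (d ^+ mdeg al)); last by apply: exprn_le_sqr_scaled; rewrite // ltnNge.
  rewrite /mdeg -prodrXr; apply: ler_prod => i _.
  rewrite normrX exprn_ge0 //=; apply: lerXn2r; rewrite ?nnegrE //.
  by apply: le_trans xd; have := mx_normr_entry_le (x - a) i 0; rewrite !mxE.
rewrite -mulr_sumr; apply: ler_wpM2l; first by rewrite exprn_ge0 // divr_ge0 // ltW.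
have corner (al : {ffun 'I_m -> 'I_N.+2}) : `|c (fun i => nat_of_ord (al i))|
    * \prod_(i < m) `|(a + const_mx r) i 0 - a i 0| ^+ al i
  = `|c (fun i => nat_of_ord (al i))| * r ^+ mdeg al.
  congr (_ * _); rewrite /mdeg -prodrXr; apply: eq_bigr => i _.
  by rewrite !mxE addrAC subrr add0r ger0_norm // ltW.
rewrite /ps_cube_abs_sum (eq_bigr _ (fun al _ => corner al)).
rewrite [leRHS](bigID (fun al : {ffun 'I_m -> 'I_N.+2} => mdeg al <= 1)%N) /=.
by rewrite lerDr; apply: sumr_ge0 => al _; rewrite mulr_ge0 // exprn_ge0 // ltW.
Qed.

Lemma differentiable_ps_affine_part c a x : differentiable (ps_affine_part c a) x.
Proof.
rewrite (_ : ps_affine_part c a = cst (c (fun _ => 0%N)) + \sum_(i < m)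
    (cst (c (fun k => nat_of_bool (k == i))) * ((fun y : 'cV[R]_m => y i 0) - cst (a i 0)))).
  apply: differentiableD => //; apply: differentiable_sum => i.
  apply: differentiableM => //; apply: differentiableB => //; exact: differentiable_coord.
by apply/funext => y; rewrite /ps_affine_part /= fct_sumE.
Qed.

Lemma analytic_on_differentiable (U : set 'cV[R]_m) f a :
  analytic_on U f -> U a -> differentiable f a.
Proof.
move=> fan Ua; have [r [r0 [c fc]]] := fan a Ua.
pose rho := r / 2.
have rho0 : 0 < rho by rewrite divr_gt0.
have rhor : rho < r by rewrite ltr_pdivrMr // ltr_pMr // ltr1n.
have corner_r : `|(a + const_mx rho) - a| < r.
  rewrite addrAC subrr add0r; apply: le_lt_trans rhor.
  by apply: mx_normr_le => [|i j]; rewrite ?mxE ?ger0_norm // ltW.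
have [[B cB] _] := fc _ corner_r.
have tail_le x : `|x - a| < rho ->
    `|f x - ps_affine_part c a x| <= B / rho ^+ 2 * `|x - a| ^+ 2.
  move=> xa; have [_ cvf] := fc x (lt_trans xa rhor).
  have cv2 : (fun N => `|ps_cube_sum c a x N - ps_affine_part c a x|) @ \oo
      --> `|f x - ps_affine_part c a x| by apply: cvg_norm; apply: cvgB => //; exact: cvg_cst.
  apply: (cvgr_to_le cv2); near=> N.
  have N0 : (0 < N)%N by near: N; exact: nbhs_infty_ge.
  rewrite -(prednK N0) ps_cube_sum_split addrAC subrr add0r.
  apply: le_trans (ps_cube_tail_le c N.-1 rho0 (lexx _) (ltW xa)) _.
  rewrite [leRHS]mulrC exprMn exprVn -mulrA; apply: ler_wpM2l; first exact: exprn_ge0.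
  rewrite mulrC; apply: ler_wpM2r; [by rewrite invr_ge0 exprn_ge0 // ltW | exact: cB].
rewrite (_ : f = ps_affine_part c a + (fun x => f x - ps_affine_part c a x)).
  apply: differentiableD; first exact: differentiable_ps_affine_part.
  exact: differentiable_sqr_bounded rho0 tail_le.
by apply/funext => x /=; rewrite addrC subrK.
Unshelve. all: by end_near.
Qed.

Lemma mx_analytic_on_differentiable p q (U : set 'cV[R]_m) (F : 'cV[R]_m -> 'M[R]_(p, q)) a :
  mx_analytic_on U F -> U a -> differentiable F a.
Proof.
by move=> Fan Ua; apply: differentiable_mx => i j; exact: analytic_on_differentiable (Fan i j) Ua.
Qed.

End AnalyticDifferentiable.

Lemma comm_mxZ (R : comPzSemiRingType) n (f g : 'M[R]_n) a :
  comm_mx f g -> comm_mx f (a *: g).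
Proof. by rewrite /comm_mx -scalemxAl -scalemxAr => ->. Qed.

Lemma comm_mx_lincomb (R : comPzSemiRingType) n k (t : 'I_k -> R) (Ks : 'I_k -> 'M[R]_n) f :
  (forall i, comm_mx f (Ks i)) -> comm_mx f (\sum_i t i *: Ks i).
Proof. by move=> fK; apply: comm_mx_sum => i _; exact: comm_mxZ. Qed.

Section SymmetryDefect.
Variables (R : realType) (n : nat).

Definition symmetry_defect (L M : 'M[R]_n) (dL dM : 'cV[R]_n -> 'M[R]_n) (c : 'cV[R]_n) :
    'cV[R]_n :=
  dM (L *m c) *m c - dL (M *m c) *m c - L *m (dM c *m c) + M *m (dL c *m c).

Lemma opbracket_diagE (L M : opfield R n) (xi : vfield R n) p dL dM :
  (forall v, is_derive p v L (dL v)) -> (forall v, is_derive p v M (dM v)) ->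
  (forall v, derivable xi p v) -> L p *m M p = M p *m L p ->
  opbracket L M xi xi p = symmetry_defect (L p) (M p) dL dM (xi p).
Proof.
move=> dLp dMp /(_ _)/derivableP dxi LM.
have cancel (T : zmodType) (a b c d e f g : T) :
    a + b - (c + d) - (e + f - d) - (b - (g + f)) = a - c - e + g.
  rewrite !opprD !opprK !addrA (addrAC _ (- f) d) (addrAC _ (- e) d) subrK.
  rewrite (addrAC _ (- f) (- b)) (addrAC _ (- e) (- b)) (addrAC _ (- c) (- b)).
  by rewrite addrK (addrAC _ (- f) g) subrK.
have DLxi v : 'D_v (opapp L xi) p = dL v *m xi p + L p *m 'D_v xi p.
  by case: (is_derive_mulmx (dLp v) (dxi v)).
have DMxi v : 'D_v (opapp M xi) p = dM v *m xi p + M p *m 'D_v xi p.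
  by case: (is_derive_mulmx (dMp v) (dxi v)).
rewrite /opbracket /lie !DLxi !DMxi /opapp subrr !mulmx0 add0r.
rewrite !mulmxBr !mulmxDr !mulmxA LM /symmetry_defect !mulmxA.
exact: cancel.
Qed.

Lemma symmetry_on_defect_eq0 (U : set 'cV[R]_n) (L M : opfield R n) p dL dM c :
  symmetry_on U L M -> U p ->
  (forall v, is_derive p v L (dL v)) -> (forall v, is_derive p v M (dM v)) ->
  L p *m M p = M p *m L p -> symmetry_defect (L p) (M p) dL dM c = 0.
Proof.
move=> LMsym Up dLp dMp LM.
rewrite -(opbracket_diagE (xi := cst c) dLp dMp _ LM) => [|v]; last exact: derivable_cst.
by apply: LMsym => // q _; exact: differentiable_cst.
Qed.

Lemma symmetry_defect_lincomb k (t : 'I_k -> R) (Ls : 'I_k -> 'M[R]_n)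
    (dLs : 'I_k -> 'cV[R]_n -> 'M[R]_n) (A : 'cV[R]_n -> 'M[R]_n) M
    (dM : {linear 'cV[R]_n -> 'M[R]_n}) c :
  A (M *m c) = M *m A c ->
  symmetry_defect (\sum_i t i *: Ls i) M (fun v => A v + \sum_i t i *: dLs i v) dM c
  = \sum_i t i *: symmetry_defect (Ls i) M (dLs i) dM c.
Proof.
move=> AM; rewrite /symmetry_defect.
have -> : dM ((\sum_i t i *: Ls i) *m c) = \sum_i t i *: dM (Ls i *m c).
  by rewrite mulmx_suml linear_sum; apply: eq_bigr => i _; rewrite -scalemxAl linearZ.
rewrite !mulmxDl mulmxDr AM -mulmxA !mulmx_suml mulmx_sumr.
have cancel (T : zmodType) (x y z w a : T) : x - (a + y) - z + (a + w) = x - y - z + w.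
  by rewrite opprD !addrA (addrAC x (- a)) (addrAC _ (- a)) subrK.
rewrite cancel; under [RHS]eq_bigr do rewrite scalerDr !scalerBr.
rewrite big_split /= !sumrB; congr (_ - _ - _ + _);
  by apply: eq_bigr => i _; rewrite -scalemxAl -?scalemxAr.
Qed.

Lemma lincomb_opbracket_eq0 (U : set 'cV[R]_n) k (Ks : 'I_k -> opfield R n) (M L : opfield R n)
    (xi : vfield R n) p (t : 'I_k -> R) (A : 'cV[R]_n -> 'M[R]_n) :
  (forall i, symmetry_on U (Ks i) M) -> U p ->
  (forall i, differentiable (Ks i) p) -> differentiable M p ->
  (forall i, comm_mx (Ks i p) (M p)) ->
  (forall v, is_derive p v L (A v + \sum_i t i *: 'd (Ks i) p v)) ->
  L p = \sum_i t i *: Ks i p -> (forall v, derivable xi p v) ->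
  (forall v, A (M p *m v) = M p *m A v) -> opbracket L M xi xi p = 0.
Proof.
move=> KMsym Up dK dM KM dL Lp dxi AM.
have dMv v : is_derive p v M ('d M p v) := is_derive_diff v dM.
have LM : comm_mx (L p) (M p).
  by rewrite Lp; apply: comm_mx_sym; apply: comm_mx_lincomb => i; exact: comm_mx_sym.
rewrite (opbracket_diagE dL dMv dxi LM) Lp symmetry_defect_lincomb // big1 // => i _.
have dKv v : is_derive p v (Ks i) ('d (Ks i) p v) := is_derive_diff v (dK i).
by rewrite (symmetry_on_defect_eq0 _ (KMsym i) Up dKv dMv (KM i)) scaler0.
Qed.

End SymmetryDefect.

Section Commutant.
Variables (R : fieldType) (n : nat) (Ks : 'I_n -> 'M[R]_n) (w : 'cV[R]_n).
Hypothesis Kw_unit : \matrix_(k, j) (Ks j *m w) k 0 \in unitmx.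

(* D kills each column K_j w of the invertible matrix, as D K_j w = K_j D w = 0. *)
Lemma commutant_annihilator_eq0 D :
  (forall j, comm_mx (Ks j) D) -> D *m w = 0 -> D = 0.
Proof.
move=> KD Dw; suff DP0 : D *m \matrix_(k, j) (Ks j *m w) k 0 = 0.
  by rewrite -(mulmxK Kw_unit D) DP0 mul0mx.
apply/matrixP => i j; rewrite !mxE.
transitivity ((D *m (Ks j *m w)) i 0); last by rewrite mulmxA -KD -mulmxA Dw mulmx0 mxE.
by rewrite mxE; apply: eq_bigr => l _; rewrite mxE.
Qed.

Lemma inverse_commute (A : 'cV[R]_n -> 'M[R]_n) :
  (forall i j, comm_mx (Ks i) (Ks j)) -> (forall v j, comm_mx (Ks j) (A v)) ->
  (forall v, A v *m w = v) -> forall j v, A (Ks j *m v) = Ks j *m A v.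
Proof.
move=> KK KA Aw j v; apply/eqP; rewrite -subr_eq0; apply/eqP.
apply: commutant_annihilator_eq0 => [l|]; last by rewrite mulmxBl -mulmxA !Aw subrr.
by apply: comm_mxB => //; apply: comm_mxM.
Qed.

End Commutant.

Section Hodograph.
Variables (R : realType) (n : nat) (x0 : R) (tau : 'cV[R]_n -> 'cV[R]_n).

Lemma xt_ptE (t : 'cV[R]_n) :
  xt_pt x0 t = xt_pt x0 0 + \sum_(j < n) t j 0 *: dir_t R j.
Proof.
apply/matrixP => i k; rewrite (ord1 k) [RHS]mxE summxE /xt_pt -(splitK i).
under eq_bigr do rewrite !mxE eqxx andbT.
case: (fintype.split i) => i' /=; rewrite ?col_mxEu ?col_mxEd.
  by rewrite big1 ?addr0 // => j _; rewrite eq_lrshift mulr0.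
rewrite mxE add0r (bigD1 i') //= eq_rshift eqxx mulr1 big1 ?addr0 // => j ji.
by rewrite eq_rshift eq_sym (negbTE ji) mulr0.
Qed.

Lemma xt_pt_compE :
  (fun q => xt_pt x0 (tau q)) = cst (xt_pt x0 0) + \sum_j (fun q => tau q j 0 *: dir_t R j).
Proof. by apply/funext => q; rewrite xt_ptE fct_sumE. Qed.

Lemma differentiable_xt_pt_comp p :
  differentiable tau p -> differentiable (fun q => xt_pt x0 (tau q)) p.
Proof.
move=> dtau; rewrite xt_pt_compE.
apply: differentiableD => //; apply: differentiable_sum => j; apply: differentiableZl.
exact: differentiable_comp dtau (differentiable_coord _ _ _).
Qed.

Lemma is_derive_xt_pt_comp p v :
  derivable tau p v ->
  is_derive p v (fun q => xt_pt x0 (tau q)) (\sum_j ('D_v tau p) j 0 *: dir_t R j).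
Proof.
move=> /derivableP /is_derive_mxP dtau; rewrite xt_pt_compE.
apply: (is_derive_eq (is_deriveD (is_derive_cst _ _ _)
  (is_derive_sum (fun j => is_derive_scalemx (dtau j 0) (is_derive_cst (dir_t R j) p v))))).
by rewrite add0r; apply: eq_bigr => j _; rewrite scaler0 addr0.
Qed.

Variables (u : 'cV[R]_(1 + n) -> 'cV[R]_n) (p : 'cV[R]_n).
Local Notation z := (xt_pt x0 (tau p)).
Hypotheses (u_tau : \forall q \near p, u (xt_pt x0 (tau q)) = q)
  (dtau : differentiable tau p) (du : differentiable u z).

Lemma hodograph_chain v : v = \sum_j ('D_v tau p) j 0 *: 'D_(dir_t R j) u z.
Proof.
have dh := differentiable_xt_pt_comp dtau.
rewrite -{1}[v](@derive_id _ _ p) -(near_eq_derive v u_tau) (derive_comp _ dh) //.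
have [_ ->] := is_derive_xt_pt_comp (diff_derivable (v := v) dtau).
by rewrite linear_sum; apply: eq_bigr => j _; rewrite linearZ -deriveE.
Qed.

Variable Ks : 'I_n -> 'M[R]_n.
Hypothesis u_pde : forall j, 'D_(dir_t R j) u z = Ks j *m 'D_(dir_x R n) u z.

Lemma hodograph_inverse v : (\sum_i ('D_v tau p) i 0 *: Ks i) *m 'D_(dir_x R n) u z = v.
Proof.
rewrite [RHS]hodograph_chain mulmx_suml.
by apply: eq_bigr => i _; rewrite u_pde scalemxAl.
Qed.

Lemma hodograph_lincomb_commute :
  \matrix_(k, j) ('D_(dir_t R j) u z) k 0 \in unitmx -> (forall i j, comm_mx (Ks i) (Ks j)) ->
  forall j v, \sum_i ('D_(Ks j *m v) tau p) i 0 *: Ks i = Ks j *m \sum_i ('D_v tau p) i 0 *: Ks i.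
Proof.
move=> uz_unit KK; apply: (inverse_commute (w := 'D_(dir_x R n) u z)) => // [|v l|v].
- rewrite (_ : \matrix_(k, j) _ = \matrix_(k, j) ('D_(dir_t R j) u z) k 0) //.
  by apply/matrixP => k j; rewrite [LHS]mxE [RHS]mxE u_pde.
- exact: comm_mx_lincomb.
- exact: hodograph_inverse.
Qed.

End Hodograph.

Theorem mainTheorem6 (R : realType) (n : nat) (U : set 'cV[R]_n)
    (Ks : 'I_n -> 'cV[R]_n -> 'M[R]_n)
    (W : set 'cV[R]_(1 + n)) (u : 'cV[R]_(1 + n) -> 'cV[R]_n) :
  open U ->
  op_frobenius_algebra U Ks ->
  (forall i j, symmetry_on U (Ks i) (Ks j)) ->
  open W ->
  mx_analytic_on W u ->
  (forall z, W z -> U (u z)) ->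
  (forall z, W z -> forall j, 'D_(@dir_t R n j) u z = Ks j (u z) *m 'D_(dir_x R n) u z) ->
  (forall z, W z -> (\matrix_(k < n, j < n) ('D_(@dir_t R n j) u z) k 0) \in unitmx) ->
  forall (x0 : R) (V : set 'cV[R]_n) (tau : 'cV[R]_n -> 'cV[R]_n),
    open V ->
    (forall p, V p -> W (xt_pt x0 (tau p)) /\ u (xt_pt x0 (tau p)) = p
                      /\ differentiable tau p) ->
    common_symmetry_on V (fun p => \sum_(i < n) tau p i 0 *: Ks i p) Ks.
Proof.
move=> _ [Kan [Kcom _]] Ksym _ uan uU hPDE hinv x0 V tau oV htau j.
have UV p : V p -> U p by case/htau => Wz [<- _]; exact: uU.
split=> [p /UV Up | xi dxi p Vp].
  by apply: comm_mx_sym; apply: comm_mx_lincomb => i; exact: Kcom.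
have [Wz [uz dtau]] := htau p Vp; have Up := UV p Vp.
have u_tau : \forall q \near p, u (xt_pt x0 (tau q)) = q.
  by apply: filterS (open_nbhs_nbhs (conj oV Vp)) => q /htau[_ []].
have dKp i : differentiable (Ks i) p := mx_analytic_on_differentiable (Kan i) Up.
apply: (lincomb_opbracket_eq0 (t := fun i => tau p i 0)
  (A := fun v => \sum_i ('D_v tau p) i 0 *: Ks i p) (Ksym^~ j) Up dKp (dKp j)
  (fun i => Kcom i j p Up)).
- by move=> v; exact: is_derive_coord_lincomb dtau dKp.
- by [].
- by move=> v; exact: diff_derivable (dxi p Vp).
move=> v; have u_pde l : 'D_(dir_t R l) u (xt_pt x0 (tau p))
    = Ks l p *m 'D_(dir_x R n) u (xt_pt x0 (tau p)) by rewrite hPDE // uz.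
exact: (hodograph_lincomb_commute u_tau dtau (mx_analytic_on_differentiable uan Wz) u_pde
  (hinv _ Wz) (fun i l => Kcom i l p Up)).
Qed.
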